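(* Let $\mathcal{D}$ be a complex vector space and let $\mathfrak{t},\mathfrak{w}$ be sesquilinear forms on $\mathcal{D}$ such that $\mathfrak{w}\geq 0$ and $M_l(\mathfrak{t})\neq\varnothing$. Then $\mathfrak{t}=\mathfrak{t}_{lr}+\mathfrak{t}_{ls}$, where $\mathfrak{t}_{lr}$ is a $\mathfrak{w}$-left regular sesquilinear form on $\mathcal{D}$ and $\mathfrak{t}_{ls}$ is a $\mathfrak{w}$-left strongly singular sesquilinear form on $\mathcal{D}$.
   Context: A sesquilinear form on $\mathcal{D}$ is a map $\mathfrak{t}:\mathcal{D}\times\mathcal{D}\to\mathbb{C}$, linear in the first and anti-linear in the second variable; write $\mathfrak{t}[f]=\mathfrak{t}(f,f)$. It is non-negative ($\mathfrak{t}\geq0$) if $\mathfrak{t}[f]\geq 0$ for all $f$. For non-negative forms $\mathfrak{u},\mathfrak{w}$ on $\mathcal{D}$: $\mathfrak{u}$ is $\mathfrak{w}$-absolutely continuous if whenever $\{f_n\}\subset\mathcal{D}$ satisfies $\mathfrak{w}[f_n]\to0$ and $\mathfrak{u}[f_n-f_m]\to0$ (as $n,m\to\infty$), then $\mathfrak{u}[f_n]\to0$; $\mathfrak{u}$ is $\mathfrak{w}$-singular if for every $f\in\mathcal{D}$ there is $\{f_n\}\subset\mathcal{D}$ with $\mathfrak{w}[f_n]\to0$ and $\mathfrak{u}[f-f_n]\to0$. For a sesquilinear form $\mathfrak{t}$, $M_l(\mathfrak{t})$ denotes the set of non-negative forms $\mathfrak{s}_1$ on $\mathcal{D}$ for which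 there exists a non-negative form $\mathfrak{s}_2$ on $\mathcal{D}$ with $|\mathfrak{t}(f,g)|\leq \mathfrak{s}_1[f]^{1/2}\mathfrak{s}_2[g]^{1/2}$ for all $f,g\in\mathcal{D}$. $\mathfrak{t}$ is $\mathfrak{w}$-left regular if some $\mathfrak{s}_1\in M_l(\mathfrak{t})$ is $\mathfrak{w}$-absolutely continuous, and $\mathfrak{w}$-left strongly singular if some $\mathfrak{s}_1\in M_l(\mathfrak{t})$ is $\mathfrak{w}$-singular. *)

From HB Require Import structures.
From mathcomp Require Import all_boot all_order all_algebra.
From mathcomp Require Import reals.
From mathcomp Require Import complex.
Set Implicit Arguments. Unset Strict Implicit. Unset Printing Implicit Defensive.
Import Order.TTheory GRing.Theory Num.Theory.
Local Open Scope ring_scope.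
Local Open Scope complex_scope.

Section Forms.
Variables (R : realType) (D : lmodType R[i]).

Definition sesquilinear (t : D -> D -> R[i]) : Prop :=
  (forall (a : R[i]) (f g h : D), t (a *: f + g) h = a * t f h + t g h) /\
  (forall (a : R[i]) (f g h : D), t f (a *: g + h) = a^* * t f g + t f h).

Definition nonneg_form (t : D -> D -> R[i]) : Prop :=
  sesquilinear t /\ forall f : D, 0 <= t f f.

Definition cvg0 (u : nat -> R[i]) : Prop :=
  forall e : R, 0 < e -> exists N : nat, forall n : nat, (N <= n)%N -> `|u n| < e%:C.

Definition cauchy_form (u : D -> D -> R[i]) (fs : nat -> D) : Prop :=
  forall e : R, 0 < e -> exists N : nat, forall n m : nat, (N <= n)%N -> (N <= m)%N ->
    `|u (fs n - fs m) (fs n - fs m)| < e%:C.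

Definition abs_continuous (u w : D -> D -> R[i]) : Prop :=
  forall fs : nat -> D, cvg0 (fun n => w (fs n) (fs n)) -> cauchy_form u fs ->
    cvg0 (fun n => u (fs n) (fs n)).

Definition form_singular (u w : D -> D -> R[i]) : Prop :=
  forall f : D, exists fs : nat -> D,
    cvg0 (fun n => w (fs n) (fs n)) /\ cvg0 (fun n => u (f - fs n) (f - fs n)).

Definition Ml (t s1 : D -> D -> R[i]) : Prop :=
  nonneg_form s1 /\ exists s2 : D -> D -> R[i], nonneg_form s2 /\
    forall f g : D, `|t f g| <= sqrtC (s1 f f) * sqrtC (s2 g g).

Definition left_regular (t w : D -> D -> R[i]) : Prop :=
  exists s1, Ml t s1 /\ abs_continuous s1 w.

Definition left_strongly_singular (t w : D -> D -> R[i]) : Prop :=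
  exists s1, Ml t s1 /\ form_singular s1 w.

End Forms.

(* Let s be a form in M_l(t), say |t(f,g)|^2 <= s[f] s2[g].  The w-regular part
   of s is described by its quadratic form
     qreg f = sup_{e > 0} inf { s[f - g] | w[g] < e },
   the limit of s[f - q_k] along minimizing sequences (q_k), for which
   w[q_k] -> 0.  By the parallelogram law minimizing sequences are s-Cauchy and
   any two of them are s-asymptotic; by a variational argument f - q_k is
   asymptotically s-orthogonal to w-null, s-bounded sequences, so that they
   depend linearly on f.  Hence for every sesquilinear u with
   |u(x,g)|^2 <= s[x] U(g) the limit u_s(f,g) = lim_k u(q_k, g) is a
   sesquilinear form with |u_s(f,g)|^2 <= (s[f] - qreg f) U(g) and
   |u(f,g) - u_s(f,g)|^2 <= qreg f U(g).  For u = t this splits t as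
   (t - t_s) + t_s, dominated on the left by s - s_s and by s_s.  The form
   s - s_s has quadratic form qreg, which is w-absolutely continuous because
   qreg is stable under w-small perturbations, while
   s_s[f - q_k] = s[f - q_k] - qreg (f - q_k) -> 0 makes s_s w-singular. *)

From HB Require Import structures.
From mathcomp Require Import all_boot all_order all_algebra.
From mathcomp Require Import reals complex.
From mathcomp Require Import classical_sets boolp interval_inference.
From mathcomp Require Import topology normedtype.
From mathcomp Require Import ring lra.
From Stdlib Require Import ClassicalEpsilon.
Import Order.TTheory GRing.Theory Num.Theory Normc.
Import numFieldNormedType.Exports.
Set Implicit Arguments. Unset Strict Implicit. Unset Printing Implicit Defensive.
Local Open Scope ring_scope.
Local Open Scope complex_scope.
Local Open Scope classical_set_scope.
Local Notation Re := complex.Re.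
Local Notation Im := complex.Im.

Section ComplexModulus.
Variable R : rcfType.
Implicit Types (x : R) (z : R[i]).

Lemma ReB y z : Re (y - z) = Re y - Re z.
Proof. by case: y; case: z. Qed.

Lemma ImB y z : Im (y - z) = Im y - Im z.
Proof. by case: y; case: z. Qed.

Lemma normc_ge0 z : 0 <= normc z.
Proof. by case: z => a b; apply: sqrtr_ge0. Qed.

Lemma normc_sqr z : normc z ^+ 2 = Re z ^+ 2 + Im z ^+ 2.
Proof. by case: z => a b; rewrite /= sqr_sqrtr // addr_ge0 ?sqr_ge0. Qed.

Lemma normC_normc z : `|z| = (normc z)%:C.
Proof. by rewrite normc_def; case: z. Qed.

Lemma normc_real x : normc x%:C = `|x|.
Proof. by rewrite /= expr0n addr0 sqrtr_sqr. Qed.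

Lemma conj_complex (a b : R) : (a +i* b)^*%R = a +i* (- b).
Proof. by []. Qed.

Lemma conj_real x : (x%:C)^*%R = x%:C.
Proof. by rewrite conj_complex oppr0. Qed.

Lemma normc_Re z : `|Re z| <= normc z.
Proof.
rewrite -(@ler_pXn2r _ 2) ?nnegrE ?normc_ge0 // real_normK ?num_real //.
by rewrite normc_sqr lerDl sqr_ge0.
Qed.

Lemma normc_Im z : `|Im z| <= normc z.
Proof.
rewrite -(@ler_pXn2r _ 2) ?nnegrE ?normc_ge0 // real_normK ?num_real //.
by rewrite normc_sqr lerDr sqr_ge0.
Qed.

Lemma normc_le_Re_Im z : normc z <= `|Re z| + `|Im z|.
Proof.
rewrite -(@ler_pXn2r _ 2) ?nnegrE ?normc_ge0 ?addr_ge0 // normc_sqr.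
rewrite sqrrD !real_normK ?num_real // -addrA lerD2l lerDr.
by rewrite mulrn_wge0 // mulr_ge0.
Qed.

Lemma Re_realM x z : Re (x%:C * z) = x * Re z.
Proof. by case: z => a b /=; ring. Qed.

Lemma Re_conj_scaleM x z : Re ((x%:C * z)^*%R * z) = x * normc z ^+ 2.
Proof.
rewrite normc_sqr; case: z => a b.
have -> : x%:C * (a +i* b) = (x * a) +i* (x * b) by simpc.
by rewrite conj_complex /=; ring.
Qed.

Lemma normC_le_sqrtCE z x y : 0 <= x -> 0 <= y ->
  (`|z| <= sqrtC x%:C * sqrtC y%:C) = (normc z ^+ 2 <= x * y).
Proof.
move=> x0 y0; rewrite -[`|z| <= _](@ler_pXn2r _ 2) ?nnegrE ?normr_ge0 //; last first.
  by rewrite mulr_ge0 ?sqrtC_ge0 ?ler0c.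
by rewrite exprMn !sqrtCK normC_normc -rmorphXn -rmorphM lecR.
Qed.

End ComplexModulus.

Section ComplexSequences.
Variable R : realType.
Implicit Types (u v : nat -> R[i]) (L M : R[i]).

Definition cvgC u L := (fun n => normc (u n - L)) @ \oo --> (0 : R).

Definition limC u :=
  lim ((fun n => Re (u n)) @ \oo) +i* lim ((fun n => Im (u n)) @ \oo).

Lemma cvgC_cst L : cvgC (fun=> L) L.
Proof. by rewrite /cvgC subrr normc0; apply: cvg_cst. Qed.

Lemma cvgC_real (x : nat -> R) (l : R) : x @ \oo --> l -> cvgC (fun n => (x n)%:C) l%:C.
Proof.
move=> xl; rewrite /cvgC.
have -> : (fun n => normc ((x n)%:C - l%:C)) = (fun n => `|x n - l|).
  by apply/funext => n; rewrite -rmorphB normc_real.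
by apply/norm_cvg0P/subr_cvg0.
Qed.

Lemma cvgC_lin (a : R[i]) u v L M :
  cvgC u L -> cvgC v M -> cvgC (fun n => a * u n + v n) (a * L + M).
Proof.
move=> uL vM; apply: (@squeeze_cvgr _ _ _ _ (fun=> 0)
  (fun n => normc a * normc (u n - L) + normc (v n - M))).
- near=> n; rewrite normc_ge0 /= -normcM.
  have -> : a * u n + v n - (a * L + M) = a * (u n - L) + (v n - M) by ring.
  exact: le_normcD.
- exact: cvg_cst.
- rewrite -[0 : R]addr0 -{1}(mulr0 (normc a)).
  by apply: cvgD; [apply: cvgMl_tmp; exact: uL | exact: vM].
Unshelve. all: by end_near. Qed.

Lemma cvgC_close u v L : cvgC v L -> cvgC (fun n => u n - v n) 0 -> cvgC u L.
Proof.
move=> vL uv; have := cvgC_lin 1 vL uv; rewrite mul1r addr0; congr cvgC.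
by apply/funext => n; rewrite mul1r addrC subrK.
Qed.

Lemma cvgC_unique u L M : cvgC u L -> cvgC u M -> L = M.
Proof.
move=> uL uM; apply/eqP; rewrite -subr_eq0; apply/eqP/eq0_normc/le_anti.
rewrite normc_ge0 andbT -[X in _ <= X](addr0 0).
apply: ler_cvg_to (cvg_cst _) (cvgD uM uL) _; near=> n.
have -> : L - M = (u n - M) - (u n - L) by ring.
by apply: le_trans (le_normcD _ _) _; rewrite normcN.
Unshelve. all: by end_near. Qed.

Lemma cvgC0_sqr u :
  (forall e, 0 < e -> \forall n \near \oo, normc (u n) ^+ 2 < e) -> cvgC u 0.
Proof.
move=> small; apply/cvgrPdist_lt => e e0; near=> n.
rewrite sub0r normrN subr0 ger0_norm ?normc_ge0 //.
rewrite -(@ltr_pXn2r _ 2) ?nnegrE ?normc_ge0 ?(ltW e0) //.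
by near: n; apply: small; apply: exprn_gt0.
Unshelve. all: by end_near. Qed.

Lemma cvgC_Re u L : cvgC u L -> (fun n => Re (u n)) @ \oo --> Re L.
Proof.
move=> uL; apply/subr_cvg0/norm_cvg0P.
apply: (@squeeze_cvgr _ _ _ _ (fun=> 0) (fun n => normc (u n - L))) => //.
  by near=> n; rewrite normr_ge0 -ReB normc_Re.
exact: cvg_cst.
Unshelve. all: by end_near. Qed.

Lemma cvgC_limC u :
  (forall e, 0 < e -> exists N, forall n, (N <= n)%N -> normc (u n - u N) < e) ->
  cvgC u (limC u).
Proof.
move=> cauchy_u.
have cvg_part (f : R[i] -> R) : (forall z, `|f z| <= normc z) ->
    (forall y z, f (y - z) = f y - f z) -> cvg ((fun n => f (u n)) @ \oo).
  move=> f_le fB; apply/cauchy_cvgP/cauchy_exP => e e0.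
  have [N uN] := cauchy_u e e0; exists (f (u N)); exists N => // n /uN.
  by rewrite /ball /= distrC -fB; apply: le_lt_trans.
have cvg_dist (f : R[i] -> R) : cvg ((fun n => f (u n)) @ \oo) ->
    (fun n => `|f (u n) - lim ((fun n => f (u n)) @ \oo)|) @ \oo --> (0 : R).
  by move=> fC; apply/norm_cvg0P/subr_cvg0.
apply: (@squeeze_cvgr _ _ _ _ (fun=> 0)
  (fun n => `|Re (u n) - lim ((fun n => Re (u n)) @ \oo)|
          + `|Im (u n) - lim ((fun n => Im (u n)) @ \oo)|)).
- near=> n; rewrite normc_ge0 /=; apply: le_trans (normc_le_Re_Im _) _.
  by rewrite ReB ImB.
- exact: cvg_cst.
- rewrite -[0 : R]addr0; apply: cvgD; apply: cvg_dist; apply: cvg_part.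
  + exact: normc_Re.
  + exact: ReB.
  + exact: normc_Im.
  + exact: ImB.
Unshelve. all: by end_near. Qed.

Lemma cvgC_normc_le u L (b : nat -> R) (beta : R) :
  cvgC u L -> b @ \oo --> beta -> (\forall n \near \oo, normc (u n) ^+ 2 <= b n) ->
  normc L ^+ 2 <= beta.
Proof.
move=> uL bbeta ub; apply: ler_cvg_to _ bbeta ub.
have normc_cvg : (fun n => normc (u n)) @ \oo --> normc L.
  apply/cvgrPdist_lt => e e0; near=> n.
  have small : normc (u n - L) < e by near: n; apply: cvgr_lt uL _ e0.
  have le1 := le_normcD (u n - L) L; have le2 := le_normcD (L - u n) (u n).
  rewrite subrK in le1; rewrite subrK -opprB normcN in le2.
  rewrite ltr_distl; apply/andP; split; lra.
by rewrite expr2; apply: cvgM.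
Unshelve. all: by end_near. Qed.

End ComplexSequences.

Section Sesquilinear.
Variables (R : realType) (D : lmodType R[i]).
Variables (u : D -> D -> R[i]) (Hu : sesquilinear u).

Lemma sesqDl f g h : u (f + g) h = u f h + u g h.
Proof. by have := Hu.1 1 f g h; rewrite scale1r mul1r. Qed.

Lemma sesq0l h : u 0 h = 0.
Proof. by apply: (addrI (u 0 h)); rewrite addr0 -sesqDl addr0. Qed.

Lemma sesqZl a f h : u (a *: f) h = a * u f h.
Proof. by have := Hu.1 a f 0 h; rewrite !addr0 sesq0l addr0. Qed.

Lemma sesqNl f h : u (- f) h = - u f h.
Proof. by rewrite -scaleN1r sesqZl mulN1r. Qed.

Lemma sesqBl f g h : u (f - g) h = u f h - u g h.
Proof. by rewrite sesqDl sesqNl. Qed.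

Lemma sesqDr f g h : u f (g + h) = u f g + u f h.
Proof. by have := Hu.2 1 f g h; rewrite scale1r conjC1 mul1r. Qed.

Lemma sesq0r f : u f 0 = 0.
Proof. by apply: (addrI (u f 0)); rewrite addr0 -sesqDr addr0. Qed.

Lemma sesqZr a f h : u f (a *: h) = a^*%R * u f h.
Proof. by have := Hu.2 a f h 0; rewrite !addr0 sesq0r addr0. Qed.

Lemma sesqNr f h : u f (- h) = - u f h.
Proof. by rewrite -scaleN1r sesqZr rmorphN1 mulN1r. Qed.

Lemma sesqBr f g h : u f (g - h) = u f g - u f h.
Proof. by rewrite sesqDr sesqNr. Qed.

End Sesquilinear.

Lemma sesquilinearB (R : realType) (D : lmodType R[i]) (u v : D -> D -> R[i]) :
  sesquilinear u -> sesquilinear v -> sesquilinear (fun f g => u f g - v f g).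
Proof. by move=> hu hv; split=> a f g h; rewrite ?hu.1 ?hv.1 ?hu.2 ?hv.2; ring. Qed.

Definition qform (R : realType) (D : lmodType R[i]) (s : D -> D -> R[i]) (f : D) :=
  Re (s f f).

Definition qnull (R : realType) (D : lmodType R[i]) (s : D -> D -> R[i])
    (h : nat -> D) :=
  forall e, 0 < e -> \forall k \near \oo, qform s (h k) < e.

Definition qbounded (R : realType) (D : lmodType R[i]) (s : D -> D -> R[i])
    (h : nat -> D) :=
  exists B, \forall k \near \oo, qform s (h k) <= B.

Section NonnegForm.
Variables (R : realType) (D : lmodType R[i]).
Variables (s : D -> D -> R[i]) (Hs : nonneg_form s).
Local Notation Q := (qform s).
Let Hs1 := Hs.1.

Lemma qform_diag f : s f f = (Q f)%:C.
Proof.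
have := Hs.2 f; rewrite /qform; case: (s f f) => a b.
by rewrite lecE /= => /andP [/eqP -> _].
Qed.

Lemma qform_ge0 f : 0 <= Q f.
Proof. by have := Hs.2 f; rewrite qform_diag ler0c. Qed.

Lemma qform0 : Q 0 = 0.
Proof. by rewrite /qform sesq0l. Qed.

Lemma nonneg_form_herm f g : s g f = (s f g)^*%R.
Proof.
have Im_diag h : Im (s h h) = 0 by rewrite qform_diag.
have := Im_diag (f + g); have := Im_diag (f + 'i%C *: g).
rewrite !(sesqDl Hs1, sesqDr Hs1, sesqZl Hs1, sesqZr Hs1) (qform_diag f) (qform_diag g).
case: (s f g) => a b; case: (s g f) => c d /= h1 h2.
by rewrite conj_complex; congr (_ +i* _); lra.
Qed.

Lemma qformD f g : Q (f + g) = Q f + Q g + 2 * Re (s f g).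
Proof.
rewrite /qform (sesqDl Hs1) !(sesqDr Hs1) (nonneg_form_herm f g).
case: (s f f) => ? ?; case: (s g g) => ? ?; case: (s f g) => ? ?.
by rewrite conj_complex /=; ring.
Qed.

Lemma qformZ a f : Q (a *: f) = normc a ^+ 2 * Q f.
Proof.
rewrite /qform (sesqZl Hs1) (sesqZr Hs1) qform_diag normc_sqr.
by case: a => ? ? /=; ring.
Qed.

Lemma qformN f : Q (- f) = Q f.
Proof. by rewrite /qform (sesqNl Hs1) (sesqNr Hs1) opprK. Qed.

Lemma qformB f g : Q (f - g) = Q f + Q g - 2 * Re (s f g).
Proof.
rewrite qformD qformN (sesqNr Hs1).
by case: (s f g) => ? ? /=; ring.
Qed.

Lemma qformD_le f g : Q (f + g) <= 2 * Q f + 2 * Q g.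
Proof. by have := qform_ge0 (f - g); rewrite qformB qformD; lra. Qed.

Lemma qformB_le f g : Q (f - g) <= 2 * Q f + 2 * Q g.
Proof. by rewrite -[Q g]qformN; apply: qformD_le. Qed.

Lemma qform_step_le x h (B : R) : 0 < B -> Q h <= B ->
  Q (x - (B^-1%:C * s x h) *: h) <= Q x - normc (s x h) ^+ 2 / B.
Proof.
move=> B0 hB; set c := s x h.
rewrite qformB qformZ (sesqZr Hs1) Re_conj_scaleM normcM normc_real.
rewrite ger0_norm ?exprMn; last by rewrite invr_ge0 ltW.
have c0 := sqr_ge0 (normc c).
have : B^-1 ^+ 2 * normc c ^+ 2 * Q h <= B^-1 * normc c ^+ 2.
  have -> : B^-1 * normc c ^+ 2 = B^-1 ^+ 2 * normc c ^+ 2 * B.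
    by field; rewrite gt_eqF.
  by apply: ler_wpM2l => //; rewrite mulr_ge0 ?sqr_ge0.
lra.
Qed.

Lemma normc_form_le f g : normc (s f g) ^+ 2 <= Q f * Q g.
Proof.
apply/ler_addgt0Pr => e e0.
have Qf0 := qform_ge0 f; have Qg0 := qform_ge0 g.
set B := Q g + e / (Q f + 1).
have B0 : 0 < B by rewrite /B ltr_pwDr // divr_gt0 //; lra.
have hB : Q g <= B by rewrite /B lerDl divr_ge0 //; lra.
have := le_trans (qform_ge0 _) (qform_step_le f B0 hB).
rewrite subr_ge0 ler_pdivrMr // => /le_trans; apply.
rewrite /B mulrDr lerD2l mulrA ler_pdivrMr; last by lra.
nra.
Qed.

Lemma normc_step_coef_le x h (B : R) : 0 < B -> Q h <= B ->
  normc (B^-1%:C * s x h) ^+ 2 <= Q x / B.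
Proof.
move=> B0 hB; rewrite normcM normc_real ger0_norm ?exprMn; last by rewrite invr_ge0 ltW.
have -> : Q x / B = B^-1 ^+ 2 * (Q x * B) by field; rewrite gt_eqF.
apply: ler_wpM2l; first exact: sqr_ge0.
by apply: le_trans (normc_form_le x h) _; apply: ler_wpM2l => //; apply: qform_ge0.
Qed.

Lemma qnull_lin a p q : qnull s p -> qnull s q -> qnull s (fun k => a *: p k + q k).
Proof.
move=> p0 q0 e e0; have a0 := sqr_ge0 (normc a).
have ea0 : 0 < e / (4 * (normc a ^+ 2 + 1)) by rewrite divr_gt0 //; lra.
near=> k; apply: le_lt_trans (qformD_le _ _) _; rewrite qformZ.
have Qp0 := qform_ge0 (p k).
have Qp : Q (p k) < e / (4 * (normc a ^+ 2 + 1)) by near: k; apply: p0.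
have Qq : Q (q k) < e / 4 by near: k; apply: q0; rewrite divr_gt0.
have : normc a ^+ 2 * Q (p k) <= e / 4.
  have -> : e / 4 = (normc a ^+ 2 + 1) * (e / (4 * (normc a ^+ 2 + 1))) by field; lra.
  by apply: ler_pM; lra.
lra.
Unshelve. all: by end_near. Qed.

Lemma qbounded_lin a p q :
  qbounded s p -> qbounded s q -> qbounded s (fun k => a *: p k + q k).
Proof.
move=> [Bp Qp] [Bq Qq]; exists (2 * (normc a ^+ 2 * Bp) + 2 * Bq).
near=> k; apply: le_trans (qformD_le _ _) _; rewrite qformZ.
have : normc a ^+ 2 * Q (p k) <= normc a ^+ 2 * Bp.
  by apply: ler_wpM2l; [exact: sqr_ge0 | near: k].
have : Q (q k) <= Bq by near: k.
lra.
Unshelve. all: by end_near. Qed.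

Lemma normC_diag_lt f e : (`|s f f| < e%:C) = (Q f < e).
Proof. by rewrite qform_diag normC_normc normc_real ger0_norm ?qform_ge0 // ltcR. Qed.

Lemma cvg0_diagP (fs : nat -> D) : cvg0 (fun n => s (fs n) (fs n)) <-> qnull s fs.
Proof.
split=> small e /(small e) [N].
  by move=> fsN; exists N => // n /fsN; rewrite normC_diag_lt.
by move=> _ fsN; exists N => n /fsN; rewrite normC_diag_lt.
Qed.

End NonnegForm.

Lemma MlP (R : realType) (D : lmodType R[i]) (t s1 : D -> D -> R[i]) :
  Ml t s1 <-> nonneg_form s1 /\ exists2 s2, nonneg_form s2 &
    forall f g, normc (t f g) ^+ 2 <= qform s1 f * qform s2 g.
Proof.
have le_iff s2 f g : nonneg_form s1 -> nonneg_form s2 ->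
    (`|t f g| <= sqrtC (s1 f f) * sqrtC (s2 g g)) =
    (normc (t f g) ^+ 2 <= qform s1 f * qform s2 g).
  move=> Hs1 Hs2; rewrite (qform_diag Hs1) (qform_diag Hs2).
  by rewrite normC_le_sqrtCE ?qform_ge0.
split=> [[Hs1 [s2 [Hs2 t_le]]] | [Hs1 [s2 Hs2 t_le]]]; split=> //.
  by exists s2 => // f g; rewrite -le_iff.
by exists s2; split=> // f g; rewrite le_iff.
Qed.

Section Decomposition.
Variables (R : realType) (D : lmodType R[i]) (s w : D -> D -> R[i]).
Hypotheses (Hs : nonneg_form s) (Hw : nonneg_form w).
Local Notation Q := (qform s).
Local Notation W := (qform w).
Local Notation qinf e f := (inf [set Q (f - g) | g in [set g | W g < e]]).

Definition qreg f := sup [set qinf e f | e in [set e : R | 0 < e]].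

Lemma qinf_has_inf e f : 0 < e -> has_inf [set Q (f - g) | g in [set g | W g < e]].
Proof.
move=> e0; split; first by exists (Q (f - 0)), 0; rewrite //= (qform0 Hw).
by exists 0 => _ [g _ <-]; apply: qform_ge0.
Qed.

Lemma qinf_le e f g : W g < e -> qinf e f <= Q (f - g).
Proof.
move=> Wg; apply: ge_inf; last by exists g.
by exists 0 => _ [h _ <-]; apply: qform_ge0.
Qed.

Lemma qreg_has_sup f : has_sup [set qinf e f | e in [set e : R | 0 < e]].
Proof.
split; first by exists (qinf 1 f), 1; rewrite /= ?ltr01.
exists (Q f) => _ [e e0 <-].
by have := @qinf_le e f 0; rewrite subr0 (qform0 Hw); apply.
Qed.

Lemma qreg_le f x :
  (forall e, 0 < e -> exists2 g, W g < e & Q (f - g) <= x) -> qreg f <= x.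
Proof.
move=> approx; apply: ge_sup; first exact: (qreg_has_sup f).1.
move=> _ [e e0 <-]; have [g Wg le_x] := approx e e0.
exact: le_trans (qinf_le f Wg) le_x.
Qed.

Lemma qreg_ge f e x : 0 < e -> (forall g, W g < e -> x <= Q (f - g)) -> x <= qreg f.
Proof.
move=> e0 lb; apply: le_trans (sup_upper_bound (qreg_has_sup f) _); last by exists e.
by apply: lb_le_inf; [exact: (qinf_has_inf f e0).1 | move=> _ [g Wg <-]; apply: lb].
Qed.

Lemma qreg_approx f e d : 0 < e -> 0 < d ->
  exists2 g, W g < e & Q (f - g) < qreg f + d.
Proof.
move=> e0 d0; have [_ [g Wg <-] lt_d] := inf_adherent d0 (qinf_has_inf f e0).
exists g => //; apply: lt_le_trans lt_d _; rewrite lerD2r.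
by apply: (sup_upper_bound (qreg_has_sup f)); exists e.
Qed.

Lemma qreg_lb f d : 0 < d ->
  exists2 e, 0 < e & forall g, W g < e -> qreg f - d < Q (f - g).
Proof.
move=> d0; have [_ [e e0 <-] lt_d] := sup_adherent d0 (qreg_has_sup f).
by exists e => // g Wg; apply: lt_le_trans lt_d (qinf_le f Wg).
Qed.

Lemma qreg_ge0 f : 0 <= qreg f.
Proof. by apply: (@qreg_ge _ 1) => // g _; apply: qform_ge0. Qed.

Lemma qreg_le_qform f : qreg f <= Q f.
Proof. by apply: qreg_le => e e0; exists 0; rewrite ?(qform0 Hw) ?subr0. Qed.

Lemma qreg_le_perturb f x :
  (forall e, 0 < e -> exists2 h, W h < e & qreg (f - h) < x) -> qreg f <= x.
Proof.
move=> perturb; apply: qreg_le => e e0.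
have e4 : 0 < e / 4 by rewrite divr_gt0.
have [h Wh lt_x] := perturb _ e4.
have [|g Wg lt_g] := qreg_approx (f - h) e4 (_ : 0 < x - qreg (f - h)).
  by rewrite subr_gt0.
exists (h + g); first by have := qformD_le Hw h g; lra.
by rewrite opprD addrA; apply: ltW; lra.
Qed.

Lemma qreg_perturb_lb f d : 0 < d ->
  exists2 e, 0 < e & forall h, W h < e -> qreg f - d <= qreg (f - h).
Proof.
move=> d0; have [e e0 lb] := qreg_lb f d0.
have e4 : 0 < e / 4 by rewrite divr_gt0.
exists (e / 4) => // h Wh; apply: (@qreg_ge _ (e / 4)) => // g Wg.
rewrite -addrA -opprD; apply/ltW/lb.
by have := qformD_le Hw h g; lra.
Qed.

Definition near_minimizer f e g := W g < e /\ Q (f - g) < qreg f + e.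

Definition minimizing f (q : nat -> D) :=
  forall e, 0 < e -> \forall k \near \oo, near_minimizer f e (q k).

Lemma near_minimizers_close f d : 0 < d -> exists2 e, 0 < e &
  forall p q, near_minimizer f e p -> near_minimizer f e q -> Q (p - q) < d.
Proof.
move=> d0; have d8 : 0 < d / 8 by rewrite divr_gt0.
have [e0 e0_gt0 lb] := qreg_lb f d8.
set m := Num.min (e0 / 4) (d / 8).
have m_e0 : m <= e0 / 4 by rewrite ge_min lexx.
have m_d : m <= d / 8 by rewrite ge_min lexx orbT.
exists m; first by rewrite lt_min d8 divr_gt0.
move=> p q [Wp Qx] [Wq Qy].
(* parallelogram law at the midpoint of [p] and [q] *)
set x := f - p; set r := p - q; set c : R := 2^-1.
have c2 : c ^+ 2 = 4^-1 by rewrite /c; field.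
have c_ge0 : 0 <= c by rewrite invr_ge0.
have Wmid : W (p - c%:C *: r) < e0.
  apply: le_lt_trans (qformB_le Hw _ _) _.
  rewrite (qformZ Hw) normc_real ger0_norm // c2.
  have := qformB_le Hw p q; rewrite -/r; lra.
have := lb _ Wmid; have -> : f - (p - c%:C *: r) = x + c%:C *: r.
  by rewrite opprB addrA addrAC.
rewrite (qformD Hs) (qformZ Hs) (sesqZr Hs.1) conj_real Re_realM normc_real.
rewrite ger0_norm // c2.
have : Q (f - q) = Q x + Q r + 2 * Re (s x r).
  by rewrite -qformD // /x /r addrA subrK.
rewrite /c; lra.
Qed.

Lemma minimizingP f q :
  minimizing f q <-> qnull w q /\ (fun k => Q (f - q k)) @ \oo --> qreg f.
Proof.
split=> [mq | [Wq Qq] e e0].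
  split=> [e e0 | ]; first by apply: filterS (mq e e0) => k [].
  apply/cvgrPdist_lt => e e0; have [e1 e1_gt0 lb] := qreg_lb f e0.
  have m0 : 0 < Num.min e e1 by rewrite lt_min e0.
  apply: filterS (mq _ m0) => k [+ Qk]; rewrite lt_min => /andP[_ /lb Qlb].
  have : Num.min e e1 <= e by rewrite ge_min lexx.
  by rewrite ltr_distl; move: Qk; lra.
near=> k; split; first by near: k; apply: Wq.
by near: k; apply: (cvgr_lt _ Qq); rewrite ltrDl.
Unshelve. all: by end_near. Qed.

Lemma minimizing_exists f : exists q, minimizing f q.
Proof.
have /choice [q near_q] : forall k : nat, exists g, near_minimizer f k.+1%:R^-1 g.
  move=> k; have k0 : 0 < k.+1%:R^-1 :> R by rewrite invr_gt0 ltr0Sn.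
  by have [g] := qreg_approx f k0 k0; exists g.
exists q => _/posnumP[e]; near=> k; have [Wq Qq] := near_q k.
have small : k.+1%:R^-1 < e%:num by near: k; apply: near_infty_natSinv_lt.
by split; [apply: lt_trans small | apply: lt_trans Qq _; rewrite ltrD2l].
Unshelve. all: by end_near. Qed.

Lemma minimizing_qbounded f q : minimizing f q -> qbounded s q.
Proof.
move=> mq; exists (2 * Q f + 2 * (qreg f + 1)).
apply: filterS (mq 1 ltr01) => k [_ Qk].
by have := qformB_le Hs f (f - q k); rewrite subKr; lra.
Qed.

Lemma minimizing_close f p q : minimizing f p -> minimizing f q ->
  qnull s (fun k => p k - q k).
Proof.
move=> mp mq d d0; have [e e0 close] := near_minimizers_close f d0.
by near=> k; apply: close; near: k; [apply: mp | apply: mq].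
Unshelve. all: by end_near. Qed.

Lemma minimizing_cauchy f q : minimizing f q ->
  forall d, 0 < d -> exists N, forall n, (N <= n)%N -> Q (q n - q N) < d.
Proof.
move=> mq d d0; have [e e0 close] := near_minimizers_close f d0.
have [N _ nearN] := mq e e0; exists N => n Nn.
by apply: close; [exact: nearN Nn | exact: nearN (leqnn N)].
Qed.

Lemma near_minimizer_orth f B d : 0 < B -> 0 < d -> exists2 e, 0 < e &
  forall g h, near_minimizer f e g -> W h < e -> Q h <= B ->
    normc (s (f - g) h) ^+ 2 < d.
Proof.
move=> B0 d0; set d' := d / (2 * B).
have d'0 : 0 < d' by rewrite divr_gt0 // mulr_gt0.
have [e1 e1_gt0 lb] := qreg_lb f d'0.
set K := (qreg f + d') / B.
have K0 : 0 <= K by apply: divr_ge0; [have := qreg_ge0 f; lra | lra].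
set E := e1 / (4 * (K + 1)).
have E0 : 0 < E by rewrite divr_gt0 //; lra.
have KE : (K + 1) * E = e1 / 4 by rewrite /E; field; lra.
exists (Num.min d' E) => [|g h [Wg Qx] Wh Qh]; first by rewrite lt_min d'0.
move: Wg Wh Qx; rewrite !lt_min => /andP[_ Wg] /andP[_ Wh] Qx.
have Qx_le : Q (f - g) <= qreg f + d'.
  by apply/ltW/(lt_le_trans Qx); rewrite lerD2l ge_min lexx.
(* the step of [qform_step_le] moves [g] by a w-small amount, so it cannot
   push [Q (f - g)] much below [qreg f] *)
set x := f - g; set c := s x h; set mu := B^-1%:C * c.
have mu_le : normc mu ^+ 2 <= K.
  apply: le_trans (normc_step_coef_le Hs x B0 Qh) _.
  by apply: ler_wpM2r => //; rewrite invr_ge0 ltW.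
have W_shift : W (g + mu *: h) < e1.
  apply: le_lt_trans (qformD_le Hw _ _) _; rewrite (qformZ Hw).
  have := sqr_ge0 (normc mu); have := qform_ge0 Hw h; nra.
have := lb _ W_shift; rewrite opprD addrA -/x => lt_shift.
have := qform_step_le Hs x B0 Qh; rewrite -/c -/mu => step.
have : normc c ^+ 2 / B < 2 * d' by lra.
by rewrite ltr_pdivrMr // /d'; have -> : 2 * (d / (2 * B)) * B = d by field; lra.
Qed.

Lemma minimizing_orth f q h : minimizing f q -> qnull w h -> qbounded s h ->
  cvgC (fun k => s (f - q k) (h k)) 0.
Proof.
move=> mq Wh [B QhB]; apply: cvgC0_sqr => d d0.
have B1 : 0 < `|B| + 1 by have := normr_ge0 B; lra.
have [e e0 orth] := near_minimizer_orth f B1 d0.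
near=> k; apply: orth; near: k; [exact: mq | exact: Wh |].
by apply: filterS QhB => k; have := ler_norm B; lra.
Unshelve. all: by end_near. Qed.

Lemma minimizing_lin a f1 f2 q1 q2 : minimizing f1 q1 -> minimizing f2 q2 ->
  minimizing (a *: f1 + f2) (fun k => a *: q1 k + q2 k).
Proof.
move=> m1 m2; set F := a *: f1 + f2; set q := fun k => a *: q1 k + q2 k.
have [p mp] := minimizing_exists F; have [Wp QFp] := (minimizingP F p).1 mp.
have [[Wq1 _] [Wq2 _]] := ((minimizingP _ _).1 m1, (minimizingP _ _).1 m2).
set r := fun k => p k - q k.
have rE : r = fun k => -1 *: q k + p k by apply/funext => k; rewrite scaleN1r addrC.
have Wq : qnull w q by apply: (qnull_lin Hw).
have Wr : qnull w r by rewrite rE; apply: (qnull_lin Hw).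
have Qq : qbounded s q.
  by apply: (qbounded_lin Hs); apply: minimizing_qbounded; [exact: m1 | exact: m2].
have Qr : qbounded s r.
  by rewrite rE; apply: (qbounded_lin Hs) Qq _; apply: minimizing_qbounded mp.
have orth_p := minimizing_orth mp Wr Qr.
have rr : cvgC (fun k => s (r k) (r k)) 0.
  have := cvgC_lin a (minimizing_orth m1 Wr Qr)
    (cvgC_lin (-1) orth_p (minimizing_orth m2 Wr Qr)).
  rewrite !mulr0 !addr0; congr cvgC; apply/funext => k.
  by rewrite /r /F /q !(sesqBl Hs.1, sesqDl Hs.1, sesqNl Hs.1, sesqZl Hs.1); ring.
apply/minimizingP; split=> //.
have -> : (fun k => Q (F - q k)) =
    (fun k => Q (F - p k) + Re (s (r k) (r k)) + 2 * Re (s (F - p k) (r k))).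
  by apply/funext => k; rewrite -qformD // /r addrA subrK.
have -> : qreg F = qreg F + Re 0 + 2 * Re 0 by rewrite /= mulr0 !addr0.
apply: cvgD; first by apply: cvgD => //; apply: cvgC_Re.
by apply: cvgMl_tmp; apply: cvgC_Re.
Qed.

Lemma minimizing_qform_compl f q : minimizing f q ->
  (fun k => Q (q k)) @ \oo --> Q f - qreg f.
Proof.
move=> mq; have [Wq Qq] := (minimizingP f q).1 mq.
have orth := minimizing_orth mq Wq (minimizing_qbounded mq).
have -> : (fun k => Q (q k)) =
    (fun k => Q f - Q (f - q k) - 2 * Re (s (f - q k) (q k))).
  apply/funext => k; have := qformD Hs (f - q k) (q k); rewrite subrK => ->.
  by ring.
have -> : Q f - qreg f = Q f - qreg f - 2 * Re 0 by rewrite /= mulr0 subr0.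
apply: cvgB; first by apply: cvgB => //; apply: cvg_cst.
by apply: cvgMl_tmp; apply: cvgC_Re.
Qed.

Definition minseq f : nat -> D := epsilon (inhabits (fun=> 0)) (minimizing f).

Lemma minseqP f : minimizing f (minseq f).
Proof. exact: epsilon_spec (minimizing_exists f). Qed.

Definition singular_part (u : D -> D -> R[i]) f g := limC (fun k => u (minseq f k) g).

Definition regular_part (u : D -> D -> R[i]) f g := u f g - singular_part u f g.

Section DominatedForm.
Variables (u : D -> D -> R[i]) (U : D -> R).
Hypotheses (Hu : sesquilinear u) (U_ge0 : forall g, 0 <= U g).
Hypothesis u_le : forall x g, normc (u x g) ^+ 2 <= Q x * U g.

Lemma normc_form_lt x g e : 0 < e -> Q x < e / (U g + 1) -> normc (u x g) ^+ 2 < e.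
Proof.
move=> e0 Qx; apply: le_lt_trans (u_le x g) _.
have U0 := U_ge0 g; have Q0 := qform_ge0 Hs x.
apply: le_lt_trans (_ : Q x * U g <= Q x * (U g + 1)) _.
  by apply: ler_wpM2l => //; lra.
by rewrite -ltr_pdivlMr //; lra.
Qed.

Lemma singular_part_cvg f q g :
  minimizing f q -> cvgC (fun k => u (q k) g) (singular_part u f g).
Proof.
have U1 : 0 < U g + 1 by have := U_ge0 g; lra.
move=> mq; apply: cvgC_close (_ : cvgC (fun k => u (minseq f k) g) _) _.
  apply: cvgC_limC => e e0.
  have [N cauchyN] := minimizing_cauchy (minseqP f) (divr_gt0 (exprn_gt0 2 e0) U1).
  exists N => n Nn; rewrite -(sesqBl Hu).
  rewrite -(@ltr_pXn2r _ 2) ?nnegrE ?normc_ge0 ?(ltW e0) //.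
  by apply: normc_form_lt; [apply: exprn_gt0 | apply: cauchyN].
apply: cvgC0_sqr => e e0; have := minimizing_close mq (minseqP f) (divr_gt0 e0 U1).
by apply: filterS => k Qk; rewrite -(sesqBl Hu); apply: normc_form_lt.
Qed.

Lemma singular_part_sesq : sesquilinear (singular_part u).
Proof.
split=> a f g h.
  have := singular_part_cvg h (minimizing_lin a (minseqP f) (minseqP g)).
  move=> /cvgC_unique; apply.
  have -> : (fun k => u (a *: minseq f k + minseq g k) h) =
      (fun k => a * u (minseq f k) h + u (minseq g k) h).
    by apply/funext => k; rewrite (sesqDl Hu) (sesqZl Hu).
  by apply: cvgC_lin; apply: singular_part_cvg; apply: minseqP.
have := singular_part_cvg (a *: g + h) (minseqP f); move=> /cvgC_unique; apply.
have -> : (fun k => u (minseq f k) (a *: g + h)) =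
    (fun k => a^*%R * u (minseq f k) g + u (minseq f k) h).
  by apply/funext => k; rewrite (sesqDr Hu) (sesqZr Hu).
by apply: cvgC_lin; apply: singular_part_cvg; apply: minseqP.
Qed.

Lemma singular_part_le f g : normc (singular_part u f g) ^+ 2 <= (Q f - qreg f) * U g.
Proof.
apply: (cvgC_normc_le (singular_part_cvg g (minseqP f))).
  by apply: cvgMr_tmp; apply: minimizing_qform_compl; apply: minseqP.
by apply: filterE => k; apply: u_le.
Qed.

Lemma regular_part_le f g : normc (regular_part u f g) ^+ 2 <= qreg f * U g.
Proof.
rewrite /regular_part.
have cvg_compl : cvgC (fun k => u (f - minseq f k) g) (u f g - singular_part u f g).
  have := cvgC_lin (-1) (singular_part_cvg g (minseqP f)) (cvgC_cst (u f g)).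
  rewrite mulN1r addrC; congr cvgC; apply/funext => k.
  by rewrite (sesqBl Hu) mulN1r addrC.
apply: (cvgC_normc_le cvg_compl).
  by apply: cvgMr_tmp; exact: ((minimizingP f _).1 (minseqP f)).2.
by apply: filterE => k; apply: u_le.
Qed.

Lemma regular_part_sesq : sesquilinear (regular_part u).
Proof. exact: sesquilinearB Hu singular_part_sesq. Qed.

End DominatedForm.

Lemma singular_part_diag f : singular_part s f f = (Q f - qreg f)%:C.
Proof.
have mq := minseqP f; have [Wq Qq] := (minimizingP f _).1 mq.
apply: cvgC_unique (singular_part_cvg Hs.1 (qform_ge0 Hs) (normc_form_le Hs) f mq) _.
have Qc : (fun k => Q f - Q (f - minseq f k)) @ \oo --> Q f - qreg f.
  by apply: cvgB => //; apply: cvg_cst.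
have := cvgC_lin (-1) (minimizing_orth mq Wq (minimizing_qbounded mq)) (cvgC_real Qc).
rewrite mulr0 add0r; congr cvgC; apply/funext => k.
by rewrite rmorphB /= -!(qform_diag Hs) !(sesqBl Hs.1, sesqBr Hs.1); ring.
Qed.

Lemma regular_part_diag f : regular_part s f f = (qreg f)%:C.
Proof.
by rewrite /regular_part singular_part_diag (qform_diag Hs) -rmorphB opprB addrC subrK.
Qed.

Lemma nonneg_regular_part : nonneg_form (regular_part s).
Proof.
split; first exact: regular_part_sesq Hs.1 (qform_ge0 Hs) (normc_form_le Hs).
by move=> f; rewrite regular_part_diag ler0c qreg_ge0.
Qed.

Lemma nonneg_singular_part : nonneg_form (singular_part s).
Proof.
split; first exact: singular_part_sesq Hs.1 (qform_ge0 Hs) (normc_form_le Hs).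
by move=> f; rewrite singular_part_diag ler0c subr_ge0 qreg_le_qform.
Qed.

Lemma qform_regular_part f : qform (regular_part s) f = qreg f.
Proof. by rewrite /qform regular_part_diag. Qed.

Lemma qform_singular_part f : qform (singular_part s) f = Q f - qreg f.
Proof. by rewrite /qform singular_part_diag. Qed.

Lemma abs_continuous_regular_part : abs_continuous (regular_part s) w.
Proof.
move=> fs /(cvg0_diagP Hw _) Wfs cauchy_fs; apply/(cvg0_diagP nonneg_regular_part _).
move=> e e0; have [N cauchyN] := cauchy_fs _ (divr_gt0 e0 (ltr0Sn _ 1)).
exists N => // m Nm; rewrite qform_regular_part.
apply: le_lt_trans (_ : qreg (fs m) <= e / 2) _; last by lra.
apply: qreg_le_perturb => e' e'0; have [M _ WM] := Wfs e' e'0.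
exists (fs (maxn N M)); first by apply: WM; apply: leq_maxr.
have := cauchyN m (maxn N M) Nm (leq_maxl _ _).
by rewrite (normC_diag_lt nonneg_regular_part) qform_regular_part.
Qed.

Lemma form_singular_singular_part : form_singular (singular_part s) w.
Proof.
move=> f; exists (minseq f); have [Wq Qq] := (minimizingP f _).1 (minseqP f).
split; first exact/(cvg0_diagP Hw _).
apply/(cvg0_diagP nonneg_singular_part _) => e e0.
have [e1 e1_gt0 lb] := qreg_perturb_lb f (divr_gt0 e0 (ltr0Sn _ 1)).
near=> k; rewrite qform_singular_part.
have Wk : W (minseq f k) < e1 by near: k; apply: Wq.
have Qk : Q (f - minseq f k) < qreg f + e / 2.
  by near: k; apply: (cvgr_lt _ Qq); rewrite ltrDl divr_gt0.
by have := lb _ Wk; lra.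
Unshelve. all: by end_near. Qed.

End Decomposition.

Theorem mainTheorem1 (R : realType) (D : lmodType R[i])
  (t w : D -> D -> R[i]) :
  sesquilinear t -> nonneg_form w -> (exists s1, Ml t s1) ->
  exists tlr tls : D -> D -> R[i],
    sesquilinear tlr /\ sesquilinear tls /\
    (forall f g : D, t f g = tlr f g + tls f g) /\
    left_regular tlr w /\ left_strongly_singular tls w.
Proof.
move=> Ht Hw [s /MlP [Hs [s2 Hs2 t_le]]]; have U_ge0 := qform_ge0 Hs2.
have t_reg := regular_part_sesq Hs Hw Ht U_ge0 t_le.
have t_sing := singular_part_sesq Hs Hw Ht U_ge0 t_le.
have t_reg_le := regular_part_le Hs Hw Ht U_ge0 t_le.
have t_sing_le := singular_part_le Hs Hw Ht U_ge0 t_le.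
exists (regular_part s w t), (singular_part s w t); do 2!split=> //.
split; first by move=> f g; rewrite /regular_part subrK.
split.
  exists (regular_part s w s); split; last exact: abs_continuous_regular_part.
  apply/MlP; split; first exact: nonneg_regular_part.
  by exists s2 => // f g; rewrite qform_regular_part.
exists (singular_part s w s); split; last exact: form_singular_singular_part.
apply/MlP; split; first exact: nonneg_singular_part.
by exists s2 => // f g; rewrite qform_singular_part.
Qed.
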